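(* Let $p\ge1$ and $n\ge p+1$ be integers. Then $S_{n-1,s}\cap S_{n,s}=\varnothing$.
   Context: Fix an integer $p\ge1$. For an integer $k\ge p$ and real $\Lambda$, the differential operator on $[-1,1]$ is $$L^{2k}(\Lambda)=(-1)^k\frac{d^{2k}}{dx^{2k}}-\Lambda(-1)^{k-p}\frac{d^{2k-2p}}{dx^{2k-2p}}.$$ A real number $\Lambda$ is an eigenvalue of order $k$ if there is a real $z\in C^{2k}[-1,1]$, $z\not\equiv0$, such that: - $L^{2k}(\Lambda)z=0$ on $[-1,1]$, and - $z^{(j)}(\pm1)=0$ for $j=0,\dots,k-1$. Such a $z$ is an eigenfunction of order $k$. $S_{k,s}$ (resp. $S_{k,a}$) is the set of eigenvalues of order $k$ admitting an even (resp. odd) eigenfunction of order $k$. *)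

From Stdlib Require Import Reals.
Open Scope R_scope.

Definition in_I (x : R) : Prop := -1 <= x <= 1.

Definition has_deriv_on_I (f f' : R -> R) : Prop :=
  forall x, in_I x ->
    limit1_in (fun y => (f y - f x) / (y - x)) (fun y => in_I y /\ y <> x) (f' x) x.

Definition cont_on_I (f : R -> R) : Prop :=
  forall x, in_I x -> limit1_in f in_I (f x) x.

Definition Cm_derivs (m : nat) (d : nat -> R -> R) : Prop :=
  (forall j, (j < m)%nat -> has_deriv_on_I (d j) (d (S j))) /\ cont_on_I (d m).

Definition is_eigenfunction (p k : nat) (Lam : R) (z : R -> R) : Prop :=
  exists d : nat -> R -> R,
    d 0%nat = z /\
    Cm_derivs (2 * k) d /\
    (forall x, in_I x ->
       (-1) ^ k * d (2 * k)%nat x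
       - Lam * (-1) ^ (k - p) * d (2 * k - 2 * p)%nat x = 0) /\
    (forall j, (j < k)%nat -> d j 1 = 0 /\ d j (-1) = 0) /\
    (exists x, in_I x /\ z x <> 0).

Definition even_on_I (z : R -> R) : Prop := forall x, in_I x -> z (- x) = z x.

Definition S_s (p k : nat) (Lam : R) : Prop :=
  (p <= k)%nat /\ exists z, is_eigenfunction p k Lam z /\ even_on_I z.

(* Let z1, z2 be even eigenfunctions of orders k and k+1 for the same Lam.  Since
   L^(2k+2) = - D^2 L^(2k), the function L^(2k) z2 is affine, a + b x, on [-1,1].  As
   L^(2k) is self-adjoint under k boundary conditions, int z1 (a + b x) = int z2 L^(2k) z1 = 0,
   i.e. a int z1 = 0 because z1 is even.  If a = 0, z2 solves L^(2k) z2 = b x; if int z1 = 0,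
   the second primitive of z1 vanishing at -1 is an eigenfunction of order k+1.  Either way a
   Pohozaev-type identity, testing the equation against z and x z', forces the function to
   vanish because p >= 1.  To integrate by parts on [-1,1], the derivatives of an eigenfunction
   are first extended to R by iterated integration of its top derivative. *)

From Stdlib Require Import Reals Lra Lia.
From Coquelicot Require Import Coquelicot.
Open Scope R_scope.

Definition clamp (x : R) : R := Rmax (-1) (Rmin 1 x).

Lemma clamp_in_I x : in_I (clamp x).
Proof. unfold in_I, clamp, Rmax, Rmin; repeat destruct Rle_dec; lra. Qed.

Lemma clamp_id x : in_I x -> clamp x = x.
Proof. unfold in_I, clamp, Rmax, Rmin; intros; repeat destruct Rle_dec; lra. Qed.

Lemma Rabs_clamp_sub x y : Rabs (clamp y - clamp x) <= Rabs (y - x).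
Proof. unfold clamp, Rmax, Rmin; repeat destruct Rle_dec; split_Rabs; lra. Qed.

Lemma continuous_clamp_comp f x : cont_on_I f -> continuous (fun y => f (clamp y)) x.
Proof.
  intros Hf. apply continuity_pt_filterlim. intros eps Heps.
  destruct (Hf (clamp x) (clamp_in_I x) eps Heps) as [alp [Ha H]].
  exists alp; split; auto.
  intros y [_ Hy]. apply H. split; [apply clamp_in_I|].
  simpl in *; unfold R_dist in *. eapply Rle_lt_trans; [apply Rabs_clamp_sub | exact Hy].
Qed.

Lemma locally_interior_I x : -1 < x < 1 -> locally x (fun t => -1 < t < 1).
Proof. apply (open_and _ _ (open_gt (-1)) (open_lt 1)). Qed.

Lemma has_deriv_on_I_ext f f' g' :
  (forall x, in_I x -> f' x = g' x) -> has_deriv_on_I f f' -> has_deriv_on_I f g'.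
Proof. intros E H x Hx; rewrite <- E by exact Hx; apply H, Hx. Qed.

Lemma has_deriv_on_I_minus f g f' g' : has_deriv_on_I f f' -> has_deriv_on_I g g' ->
  has_deriv_on_I (fun x => f x - g x) (fun x => f' x - g' x).
Proof.
  intros Hf Hg x Hx eps Heps.
  destruct (limit_minus _ _ _ _ _ _ (Hf x Hx) (Hg x Hx) eps Heps) as [alp [Ha H]].
  exists alp; split; auto. intros y [[Iy Hy] Hd].
  replace ((f y - g y - (f x - g x)) / (y - x))
    with ((f y - f x) / (y - x) - (g y - g x) / (y - x)) by (field; lra).
  exact (H y (conj (conj Iy Hy) Hd)).
Qed.

Lemma has_deriv_on_I_of_is_derive f f' :
  (forall x, is_derive f x (f' x)) -> has_deriv_on_I f f'.
Proof.
  intros H x _ eps Heps.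
  destruct (proj1 (is_derive_Reals f x (f' x)) (H x) eps Heps) as [del Hd].
  exists del; split; [apply cond_pos|].
  intros y [[_ Hy] Hyd]. simpl in *; unfold R_dist in *.
  specialize (Hd (y - x)). replace (x + (y - x)) with y in Hd by ring.
  apply Hd; lra.
Qed.

Lemma derivable_pt_lim_of_has_deriv_on_I f f' x :
  has_deriv_on_I f f' -> -1 < x < 1 -> derivable_pt_lim f x (f' x).
Proof.
  intros H Hx eps Heps.
  destruct (H x ltac:(unfold in_I; lra) eps Heps) as [alp [Ha Hal]].
  assert (Hd : 0 < Rmin alp (Rmin (1 - x) (x + 1))) by (repeat apply Rmin_pos; lra).
  exists (mkposreal _ Hd). intros h Hh0 Hh. simpl in Hh.
  pose proof (Rmin_l alp (Rmin (1 - x) (x + 1))).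
  pose proof (Rmin_r alp (Rmin (1 - x) (x + 1))).
  pose proof (Rmin_l (1 - x) (x + 1)). pose proof (Rmin_r (1 - x) (x + 1)).
  specialize (Hal (x + h)). simpl in Hal; unfold R_dist in Hal.
  replace (x + h - x) with h in Hal by ring.
  apply Hal. unfold in_I. repeat split; split_Rabs; lra.
Qed.

Lemma cont_on_I_of_has_deriv_on_I f f' : has_deriv_on_I f f' -> cont_on_I f.
Proof.
  intros H x Hx.
  (* [f y = f x + q y * (y - x)] away from [x], with [q] tending to [f' x] *)
  assert (L : limit1_in (fun y => f x + (f y - f x) / (y - x) * (y - x))
                (fun y => in_I y /\ y <> x) (f x + f' x * (x - x)) x).
  { apply limit_plus; [exact (limit_free (fun _ => f x) _ x x)|].
    apply limit_mul; [apply H, Hx|].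
    apply limit_minus; [apply lim_x | exact (limit_free (fun _ => x) _ x x)]. }
  replace (f x + f' x * (x - x)) with (f x) in L by ring.
  intros eps Heps. destruct (L eps Heps) as [alp [Ha Hal]].
  exists alp; split; auto. intros y [Iy Hy].
  destruct (Req_dec y x) as [->|Hne].
  - simpl; unfold R_dist; rewrite Rminus_diag, Rabs_R0; lra.
  - replace (f y) with (f x + (f y - f x) / (y - x) * (y - x)) by (field; lra).
    exact (Hal y (conj (conj Iy Hne) Hy)).
Qed.

Lemma is_derive_0_const_on_I h :
  (forall y, -1 < y < 1 -> is_derive h y 0) -> (forall y, in_I y -> continuous h y) ->
  forall x, in_I x -> h x = h (-1).
Proof.
  intros Hd Hc x Hx. destruct (Req_dec x (-1)) as [->|Hne]; auto.
  destruct (MVT_gen h (-1) x (fun _ => 0)) as [c [_ Hc']]; [| |lra];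
    intros y Hy; unfold in_I, Rmin, Rmax in *; destruct Rle_dec; try lra.
  - apply Hd; lra.
  - apply continuity_pt_filterlim, Hc; lra.
Qed.

Lemma has_deriv_on_I_0_const h :
  has_deriv_on_I h (fun _ => 0) -> forall x, in_I x -> h x = h (-1).
Proof.
  intros Hd x Hx.
  pose (K := fun y => h (clamp y)).
  assert (E : forall y, in_I y -> K y = h y) by (intros; unfold K; rewrite clamp_id; auto).
  rewrite <- (E x Hx), <- (E (-1)) by (unfold in_I; lra).
  apply is_derive_0_const_on_I; auto.
  - intros y Hy. apply is_derive_ext_loc with h.
    + apply (filter_imp (fun t => -1 < t < 1)); [|exact (locally_interior_I y Hy)].
      intros t Ht. symmetry. apply E. unfold in_I; lra.
    + apply is_derive_Reals, (derivable_pt_lim_of_has_deriv_on_I h (fun _ => 0)); auto.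
  - intros y _. apply continuous_clamp_comp, (cont_on_I_of_has_deriv_on_I h _ Hd).
Qed.

Definition Cm_derivs_R (m : nat) (e : nat -> R -> R) : Prop :=
  (forall j, (j < m)%nat -> forall x, is_derive (e j) x (e (S j) x)) /\
  (forall j, (j <= m)%nat -> forall x, continuous (e j) x).

Lemma Cm_derivs_R_le m m' e : (m' <= m)%nat -> Cm_derivs_R m e -> Cm_derivs_R m' e.
Proof. intros Hm [H1 H2]; split; intros; [apply H1 | apply H2]; lia. Qed.

Lemma continuous_of_is_derive (f f' : R -> R) x : is_derive f x (f' x) -> continuous f x.
Proof.
  intros H. apply (ex_derive_continuous (K := R_AbsRing) (V := R_NormedModule)).
  exists (f' x); exact H.
Qed.

Lemma is_derive_RInt_left (f : R -> R) x : (forall y, continuous f y) ->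
  is_derive (fun y => RInt f (-1) y) x (f x).
Proof.
  intros Hf. apply (is_derive_RInt (V := R_CompleteNormedModule)) with (a := -1); [|apply Hf].
  apply filter_forall. intros b. apply (RInt_correct (V := R_CompleteNormedModule)).
  apply ex_RInt_continuous. intros; apply Hf.
Qed.

Lemma is_derive_const_plus_RInt_left (f : R -> R) c x : (forall y, continuous f y) ->
  is_derive (fun y => c + RInt f (-1) y) x (f x).
Proof.
  intros Hf. apply is_derive_Reals. rewrite <- (Rplus_0_l (f x)).
  apply derivable_pt_lim_plus; [apply derivable_pt_lim_const|].
  apply is_derive_Reals, is_derive_RInt_left, Hf.
Qed.

(* [ext_iter N d i] is the [i]-fold primitive of [d N] (extended by constants outside
   [-1,1]), the [l]-th primitive taking the value [d (N - l) (-1)] at [-1]. *)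
Fixpoint ext_iter (N : nat) (d : nat -> R -> R) (i : nat) : R -> R :=
  match i with
  | O => fun x => d N (clamp x)
  | S i => fun x => d (N - S i)%nat (-1) + RInt (ext_iter N d i) (-1) x
  end.

Definition extend (N : nat) (d : nat -> R -> R) (j : nat) : R -> R := ext_iter N d (N - j).

Lemma continuous_ext_iter N d : cont_on_I (d N) -> forall i x, continuous (ext_iter N d i) x.
Proof.
  intros Hc i. induction i as [|i IH]; intros x; [apply continuous_clamp_comp, Hc|].
  apply (continuous_of_is_derive _ (ext_iter N d i)), is_derive_const_plus_RInt_left, IH.
Qed.

Lemma is_derive_ext_iter N d : cont_on_I (d N) -> forall i x,
  is_derive (ext_iter N d (S i)) x (ext_iter N d i x).
Proof. intros Hc i x. apply is_derive_const_plus_RInt_left, continuous_ext_iter, Hc. Qed.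

Lemma Cm_derivs_R_extend N d : cont_on_I (d N) -> Cm_derivs_R N (extend N d).
Proof.
  intros Hc. split; intros j Hj x; unfold extend.
  - replace (N - j)%nat with (S (N - S j)) by lia. apply is_derive_ext_iter, Hc.
  - apply continuous_ext_iter, Hc.
Qed.

Lemma extend_agree N d : Cm_derivs N d ->
  forall j, (j <= N)%nat -> forall x, in_I x -> extend N d j x = d j x.
Proof.
  intros [Hd Hc].
  enough (K : forall i, (i <= N)%nat -> forall x, in_I x -> ext_iter N d i x = d (N - i)%nat x).
  { intros j Hj x Hx. unfold extend. rewrite K by (auto; lia). f_equal. lia. }
  induction i as [|i IH]; intros Hi x Hx.
  - simpl. rewrite clamp_id, Nat.sub_0_r by exact Hx. reflexivity.
  - set (j := (N - S i)%nat). assert (Hj : (N - i)%nat = S j) by (unfold j; lia).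
    (* [d j - ext_iter N d (S i)] has derivative [0] on [-1,1], hence is constant there *)
    assert (H0 : has_deriv_on_I (fun y => d j y - ext_iter N d (S i) y) (fun _ => 0)).
    { apply (has_deriv_on_I_ext _ (fun y => d (S j) y - ext_iter N d i y)).
      - intros y Hy. rewrite IH, Hj by (auto; lia). ring.
      - apply has_deriv_on_I_minus; [apply Hd; unfold j; lia|].
        apply has_deriv_on_I_of_is_derive. intros y; apply is_derive_ext_iter, Hc. }
    pose proof (has_deriv_on_I_0_const _ H0 x Hx) as K. cbv beta in K.
    simpl ext_iter in K |- *. fold j in K |- *. rewrite RInt_point in K.
    unfold zero in K; simpl in K. lra.
Qed.

Definition int_I (f : R -> R) : R := RInt f (-1) 1.

Lemma ex_RInt_I (f : R -> R) a b : (forall x, continuous f x) -> ex_RInt f a b.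
Proof. intros H. apply (ex_RInt_continuous (V := R_CompleteNormedModule)); intros; apply H. Qed.

Lemma int_I_ext (f g : R -> R) : (forall x, -1 < x < 1 -> f x = g x) -> int_I f = int_I g.
Proof.
  intros H. apply RInt_ext. intros x Hx. apply H.
  rewrite Rmin_left, Rmax_right in Hx by lra. exact Hx.
Qed.

Lemma int_I_lin (u v : R -> R) c1 c2 : (forall x, continuous u x) -> (forall x, continuous v x) ->
  int_I (fun x => c1 * u x - c2 * v x) = c1 * int_I u - c2 * int_I v.
Proof.
  intros Hu Hv. unfold int_I.
  pose proof (ex_RInt_I u (-1) 1 Hu) as Eu. pose proof (ex_RInt_I v (-1) 1 Hv) as Ev.
  rewrite (RInt_minus (V := R_CompleteNormedModule) (fun x => scal c1 (u x)) (fun x => scal c2 (v x)))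
    by (apply (ex_RInt_scal (V := R_CompleteNormedModule)); assumption).
  rewrite !(RInt_scal (V := R_CompleteNormedModule)) by assumption. reflexivity.
Qed.

Lemma int_I_zero : int_I (fun _ => 0) = 0.
Proof. unfold int_I. rewrite RInt_const. unfold scal; simpl; unfold mult; simpl. ring. Qed.

Lemma int_I_by_parts (u u' v v' : R -> R) :
  (forall x, is_derive u x (u' x)) -> (forall x, is_derive v x (v' x)) ->
  (forall x, continuous u' x) -> (forall x, continuous v' x) ->
  int_I (fun x => u' x * v x) = u 1 * v 1 - u (-1) * v (-1) - int_I (fun x => u x * v' x).
Proof.
  intros Du Dv Cu Cv.
  assert (Cuv : forall x, continuous (fun x => u' x * v x) x).
  { intros x. apply (continuous_mult u' v); [apply Cu | exact (continuous_of_is_derive _ _ x (Dv x))]. }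
  assert (Cvu : forall x, continuous (fun x => u x * v' x) x).
  { intros x. apply (continuous_mult u v'); [exact (continuous_of_is_derive _ _ x (Du x)) | apply Cv]. }
  assert (K : is_RInt (fun x => 1 * (u' x * v x) - (-1) * (u x * v' x)) (-1) 1
                 (u 1 * v 1 - u (-1) * v (-1))).
  { apply (is_RInt_derive (V := R_CompleteNormedModule) (fun x => u x * v x)).
    - intros x _. apply is_derive_Reals. replace (1 * (u' x * v x) - -1 * (u x * v' x))
        with (u' x * v x + u x * v' x) by ring.
      apply derivable_pt_lim_mult; apply is_derive_Reals; auto.
    - intros x _. apply continuity_pt_filterlim.
      apply continuity_pt_minus; apply continuity_pt_scal; apply continuity_pt_filterlim; [apply Cuv | apply Cvu]. }
  apply (is_RInt_unique (V := R_CompleteNormedModule)) in K. fold (int_I (fun x => 1 * (u' x * v x) - -1 * (u x * v' x))) in K.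
  rewrite int_I_lin in K by auto. lra.
Qed.

Lemma int_I_odd (z : R -> R) : (forall x, in_I x -> z (- x) = z x) -> (forall x, continuous z x) ->
  int_I (fun x => x * z x) = 0.
Proof.
  intros He Hc. set (f := fun x => x * z x).
  assert (Cf : forall x, continuous f x).
  { intros x. apply (continuous_mult (fun x => x) z); [apply continuous_id | auto]. }
  (* the substitution [x = -y] turns [int_I f] into [- int_I f] *)
  pose proof (RInt_comp_lin (V := R_CompleteNormedModule) f (-1) 0 (-1) 1 (ex_RInt_I _ _ _ Cf)) as K.
  replace (-1 * -1 + 0) with 1 in K by ring. replace (-1 * 1 + 0) with (-1) in K by ring.
  assert (Hf : RInt f 1 (-1) = int_I f).
  { rewrite <- K. apply int_I_ext. intros x Hx. unfold f, scal; simpl; unfold mult; simpl.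
    replace (-1 * x + 0) with (- x) by ring. rewrite He by (unfold in_I; lra). ring. }
  rewrite <- (opp_RInt_swap (V := R_CompleteNormedModule) f) in Hf by exact (ex_RInt_I _ _ _ Cf).
  unfold opp in Hf; simpl in Hf. fold (int_I f) in Hf. lra.
Qed.

Lemma int_I_sqr_eq0 (g : R -> R) : (forall x, continuous g x) ->
  int_I (fun x => g x * g x) = 0 -> forall x, in_I x -> g x = 0.
Proof.
  intros Hc H0 x0 Hx0. destruct (Req_dec (g x0) 0) as [|Hne]; [assumption|]. exfalso.
  set (h := fun x => g x * g x) in H0.
  assert (Hh : 0 < h x0) by (unfold h; nra).
  assert (Ch : forall x, continuous h x) by (intros; apply (continuous_mult g g); auto).
  destruct (proj2 (continuity_pt_filterlim h x0) (Ch x0) (h x0 / 2)) as [alp [Ha Hal]]; [lra|].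
  assert (Pos : forall y, Rabs (y - x0) < alp -> 0 < h y).
  { intros y Hy. destruct (Req_dec y x0) as [->|Hn]; [assumption|].
    assert (Q : Rabs (h y - h x0) < h x0 / 2) 
      by (apply (Hal y); split; [split; [exact I | exact (not_eq_sym Hn)] | exact Hy]).
    split_Rabs; lra. }
  (* [h >= 0] everywhere and [h > 0] on a subinterval [a, b] of [-1, 1] *)
  set (a := Rmax (-1) (x0 - alp / 2)). set (b := Rmin 1 (x0 + alp / 2)).
  unfold in_I in Hx0.
  assert (Hab : -1 <= a /\ a < b /\ b <= 1 /\ x0 - alp / 2 <= a /\ b <= x0 + alp / 2).
  { unfold a, b, Rmax, Rmin. repeat destruct Rle_dec; lra. }
  assert (E : forall a b, ex_RInt h a b) by (intros; apply ex_RInt_I; auto).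
  assert (I1 : 0 <= RInt h (-1) a) by (apply RInt_ge_0; [lra|auto|intros; unfold h; nra]).
  assert (I3 : 0 <= RInt h b 1) by (apply RInt_ge_0; [lra|auto|intros; unfold h; nra]).
  assert (I2 : 0 < RInt h a b).
  { apply RInt_gt_0; [lra| |intros; auto]. intros y Hy. apply Pos. split_Rabs; lra. }
  pose proof (RInt_Chasles h (-1) a b (E _ _) (E _ _)) as C1.
  pose proof (RInt_Chasles h (-1) b 1 (E _ _) (E _ _)) as C2.
  unfold plus in C1, C2; simpl in C1, C2. unfold int_I in H0. lra.
Qed.

Lemma is_derive_Rmult (f g : R -> R) x a b : is_derive f x a -> is_derive g x b ->
  is_derive (fun y => f y * g y) x (a * g x + f x * b).
Proof.
  intros Hf Hg. apply is_derive_Reals, derivable_pt_lim_mult; apply is_derive_Reals; assumption.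
Qed.

Lemma continuous_Rmult (f g : R -> R) x : continuous f x -> continuous g x ->
  continuous (fun y => f y * g y) x.
Proof. apply (continuous_mult f g). Qed.

Lemma continuous_derivs_mult M N e f i j x : Cm_derivs_R M e -> Cm_derivs_R N f ->
  (i <= M)%nat -> (j <= N)%nat -> continuous (fun y => e i y * f j y) x.
Proof. intros [_ He] [_ Hf] Hi Hj. apply continuous_Rmult; auto. Qed.

Lemma int_I_parts_iter M N e f : Cm_derivs_R M e -> Cm_derivs_R N f ->
  forall r, (r <= M)%nat -> (forall i, (i < r)%nat -> e i 1 = 0 /\ e i (-1) = 0) ->
  forall j, (j + r <= N)%nat ->
  int_I (fun x => e r x * f j x) = (-1) ^ r * int_I (fun x => e 0%nat x * f (j + r)%nat x).
Proof.
  intros He Hf r. induction r as [|r IH]; intros Hr Hb j Hj.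
  - rewrite Nat.add_0_r, pow_O, Rmult_1_l. reflexivity.
  - destruct (Hb r) as [B1 B2]; [lia|].
    rewrite (int_I_by_parts (e r) (e (S r)) (f j) (f (S j))); [| apply He; lia
      | apply Hf; lia | apply He; lia | apply Hf; lia].
    rewrite B1, B2, IH by (auto; lia). replace (S j + r)%nat with (j + S r)%nat by lia.
    simpl. ring.
Qed.

Definition L_op (m p : nat) (Lam : R) (e : nat -> R -> R) (x : R) : R :=
  (-1) ^ m * e (2 * m)%nat x - Lam * (-1) ^ (m - p) * e (2 * m - 2 * p)%nat x.

Lemma int_I_mul_L_op m p Lam e f : Cm_derivs_R m e -> Cm_derivs_R (2 * m) f ->
  (forall j, (j < m)%nat -> e j 1 = 0 /\ e j (-1) = 0) ->
  int_I (fun x => e 0%nat x * L_op m p Lam f x) =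
  int_I (fun x => e m x * f m x) - Lam * int_I (fun x => e (m - p)%nat x * f (m - p)%nat x).
Proof.
  intros He Hf Hb. unfold L_op.
  rewrite (int_I_ext _ (fun x => (-1) ^ m * (e 0%nat x * f (2 * m)%nat x)
                        - Lam * (-1) ^ (m - p) * (e 0%nat x * f (2 * m - 2 * p)%nat x)))
    by (intros; ring).
  rewrite int_I_lin by (intros; apply (continuous_derivs_mult m (2 * m)); auto; lia).
  rewrite (int_I_parts_iter m (2 * m) e f He Hf m), (int_I_parts_iter m (2 * m) e f He Hf (m - p))
    by (intros; first [lia | apply Hb; lia]).
  replace (m + m)%nat with (2 * m)%nat by lia.
  replace (m - p + (m - p))%nat with (2 * m - 2 * p)%nat by lia.
  ring.
Qed.

(* [xd e j] is the [j]-th derivative of [x * e 1 x]. *)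
Definition xd (e : nat -> R -> R) (j : nat) (x : R) : R := x * e (S j) x + INR j * e j x.

Lemma Cm_derivs_R_xd N e : Cm_derivs_R (S N) e -> Cm_derivs_R N (xd e).
Proof.
  intros [Hd Hc]. split; intros j Hj x; unfold xd.
  - apply is_derive_Reals. rewrite S_INR.
    replace (x * e (S (S j)) x + (INR j + 1) * e (S j) x)
      with ((1 * e (S j) x + x * e (S (S j)) x) + INR j * e (S j) x) by ring.
    apply derivable_pt_lim_plus; [apply derivable_pt_lim_mult | apply derivable_pt_lim_scal];
      first [apply derivable_pt_lim_id | apply is_derive_Reals, Hd; lia].
  - apply (continuous_plus (fun x => x * e (S j) x) (fun x => INR j * e j x)).
    + apply continuous_Rmult; [apply continuous_id | apply Hc; lia].
    + apply continuous_Rmult; [apply continuous_const | apply Hc; lia].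
Qed.

(* Rellich's identity, from [int_I (x (e^2)') = - int_I (e^2)]. *)
Lemma int_I_xd_mul r e : Cm_derivs_R (S r) e -> e r 1 = 0 -> e r (-1) = 0 ->
  int_I (fun x => xd e r x * e r x) = (INR r - 1/2) * int_I (fun x => e r x * e r x).
Proof.
  intros He B1 B2.
  set (sq' := fun x => e (S r) x * e r x + e r x * e (S r) x).
  assert (C : forall i j x, (i <= S r)%nat -> (j <= S r)%nat -> continuous (fun y => e i y * e j y) x)
    by (intros; apply (continuous_derivs_mult (S r) (S r)); auto).
  assert (Cx : forall x, continuous (fun y => y * sq' y) x).
  { intros x. apply continuous_Rmult; [apply continuous_id|].
    apply (continuous_plus (fun y => e (S r) y * e r y)); apply C; lia. }
  assert (K : int_I (fun x => 1 * (e r x * e r x)) = - int_I (fun x => x * sq' x)).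
  { rewrite (int_I_by_parts (fun x => x) (fun _ => 1) (fun x => e r x * e r x) sq').
    - rewrite B1, B2. lra.
    - intros x. apply is_derive_Reals, derivable_pt_lim_id.
    - intros x. apply is_derive_Rmult; apply He; lia.
    - intros x. apply continuous_const.
    - intros x. apply (continuous_plus (fun y => e (S r) y * e r y)); apply C; lia. }
  rewrite (int_I_ext (fun x => 1 * (e r x * e r x)) (fun x => e r x * e r x)) in K by (intros; ring).
  rewrite (int_I_ext _ (fun x => / 2 * (x * sq' x) - - INR r * (e r x * e r x)))
    by (intros; unfold xd, sq'; field).
  rewrite int_I_lin by (intros; auto). lra.
Qed.

Lemma Cm_derivs_R_vanish_down m e : Cm_derivs_R m e -> (forall j, (j < m)%nat -> e j (-1) = 0) ->
  (forall x, in_I x -> e m x = 0) -> forall j, (j <= m)%nat -> forall x, in_I x -> e j x = 0.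
Proof.
  intros [Hd Hc] Hb Hm.
  enough (K : forall i, (i <= m)%nat -> forall x, in_I x -> e (m - i)%nat x = 0).
  { intros j Hj x Hx. replace j with (m - (m - j))%nat by lia. apply K; auto; lia. }
  induction i as [|i IH]; intros Hi x Hx; [rewrite Nat.sub_0_r; auto|].
  rewrite is_derive_0_const_on_I with (x := x); auto.
  - apply Hb; lia.
  - intros y Hy. replace 0 with (e (S (m - S i)) y) by (replace (S (m - S i)) with (m - i)%nat by lia;
      apply IH; [lia | unfold in_I; lra]).
    apply Hd; lia.
  - intros y _. apply Hc; lia.
Qed.

(* A Pohozaev-type argument: testing [L_op m p Lam e] against [e] and against [x e'] gives
   [A = Lam B] and [(m - 1/2) A = Lam (m - p - 1/2) B] for [A = int_I (e^(m))^2],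
   [B = int_I (e^(m-p))^2]; since [p >= 1] this forces [A = 0]. *)
Lemma vanish_of_L_op_moments m p Lam e : (1 <= p)%nat -> (p <= m)%nat -> Cm_derivs_R (2 * m) e ->
  (forall j, (j <= m)%nat -> e j 1 = 0 /\ e j (-1) = 0) ->
  int_I (fun x => e 0%nat x * L_op m p Lam e x) = 0 ->
  int_I (fun x => x * e 1%nat x * L_op m p Lam e x) = 0 ->
  forall j, (j <= m)%nat -> forall x, in_I x -> e j x = 0.
Proof.
  intros Hp Hpm He Hb H0 H1.
  set (A := int_I (fun x => e m x * e m x)).
  set (B := int_I (fun x => e (m - p)%nat x * e (m - p)%nat x)).
  assert (HA : A = Lam * B).
  { rewrite int_I_mul_L_op in H0; [unfold A, B; lra | | exact He | intros j Hj; apply Hb; lia].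
    apply (Cm_derivs_R_le (2 * m)); [lia | exact He]. }
  assert (HAB : (INR m - 1/2) * A - Lam * ((INR (m - p) - 1/2) * B) = 0).
  { rewrite (int_I_ext _ (fun x => xd e 0 x * L_op m p Lam e x)) in H1
      by (intros; unfold xd; simpl; ring).
    rewrite int_I_mul_L_op in H1; [| |exact He|].
    - rewrite (int_I_xd_mul m), (int_I_xd_mul (m - p)) in H1
        by (first [apply (Cm_derivs_R_le (2 * m)); [lia | exact He] | apply Hb; lia]).
      exact H1.
    - apply Cm_derivs_R_xd, (Cm_derivs_R_le (2 * m)); [lia | exact He].
    - intros j Hj. destruct (Hb j) as [b1 b2]; [lia|]. destruct (Hb (S j)) as [b3 b4]; [lia|].
      unfold xd. rewrite b1, b2, b3, b4. split; ring. }
  rewrite minus_INR in HAB by lia.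
  assert (HpB : INR p * (Lam * B) = 0) by (rewrite HA in HAB; lra).
  assert (Hp0 : 0 < INR p) by (apply lt_0_INR; lia).
  assert (HA0 : A = 0).
  { rewrite HA. destruct (Rmult_integral _ _ HpB); [lra | assumption]. }
  apply (Cm_derivs_R_vanish_down m); [apply (Cm_derivs_R_le (2 * m)); [lia | exact He]
    | intros; apply Hb; lia |].
  apply int_I_sqr_eq0, HA0. intros x; apply He; lia.
Qed.

Definition eigen_R (p k : nat) (Lam : R) (e : nat -> R -> R) : Prop :=
  Cm_derivs_R (2 * k) e /\ (forall j, (j < k)%nat -> e j 1 = 0 /\ e j (-1) = 0) /\
  forall x, in_I x -> L_op k p Lam e x = 0.

Lemma S_s_eigen_R p k Lam : S_s p k Lam -> exists e, eigen_R p k Lam e /\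
  int_I (fun x => x * e 0%nat x) = 0 /\ exists x, in_I x /\ e 0%nat x <> 0.
Proof.
  intros [_ [z [[d [D0 [Cm [Op [Bc NZ]]]]] Ev]]].
  pose proof (extend_agree _ _ Cm) as Ag. pose proof (Cm_derivs_R_extend _ _ (proj2 Cm)) as Ce.
  assert (Ip : in_I 1) by (unfold in_I; lra). assert (Im : in_I (-1)) by (unfold in_I; lra).
  assert (Ag0 : forall x, in_I x -> extend (2 * k) d 0%nat x = z x).
  { intros x Hx. rewrite Ag, D0 by (auto; lia). reflexivity. }
  exists (extend (2 * k) d). split; [split; [exact Ce | split] | split].
  - intros j Hj. rewrite !Ag by (auto; lia). apply Bc, Hj.
  - intros x Hx. unfold L_op. rewrite !Ag by (auto; lia). apply Op, Hx.
  - apply int_I_odd; [|apply Ce; lia].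
    intros x Hx. rewrite !Ag0 by (unfold in_I in *; lra). apply Ev, Hx.
  - destruct NZ as [x [Hx Hz]]. exists x. rewrite Ag0; auto.
Qed.

Lemma is_derive_L_op m p Lam e x : Cm_derivs_R (S (2 * m)) e ->
  is_derive (L_op m p Lam e) x (L_op m p Lam (fun j => e (S j)) x).
Proof.
  intros [Hd _]. unfold L_op. apply is_derive_Reals.
  apply derivable_pt_lim_minus; apply derivable_pt_lim_scal; apply is_derive_Reals, Hd; lia.
Qed.

Lemma L_op_succ k p Lam e x : (p <= k)%nat ->
  L_op (S k) p Lam e x = - L_op k p Lam (fun j => e (S (S j))) x.
Proof.
  intros Hpk. unfold L_op.
  replace (2 * S k)%nat with (S (S (2 * k))) by lia.
  replace (S (S (2 * k)) - 2 * p)%nat with (S (S (2 * k - 2 * p))) by lia.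
  replace (S k - p)%nat with (S (k - p)) by lia. simpl. ring.
Qed.

Lemma affine_of_is_derive2_0 (g g' g'' : R -> R) :
  (forall x, is_derive g x (g' x)) -> (forall x, is_derive g' x (g'' x)) ->
  (forall x, in_I x -> g'' x = 0) -> exists a b, forall x, in_I x -> g x = a + b * x.
Proof.
  intros D1 D2 H0.
  assert (Hb : forall x, in_I x -> g' x = g' (-1)).
  { apply is_derive_0_const_on_I.
    - intros y Hy. rewrite <- (H0 y) by (unfold in_I; lra). apply D2.
    - intros y _. exact (continuous_of_is_derive _ _ y (D2 y)). }
  exists (g (-1) - g' (-1) * (-1)), (g' (-1)). intros x Hx.
  enough (K : g x - g' (-1) * x = g (-1) - g' (-1) * (-1)) by lra.
  apply (is_derive_0_const_on_I (fun x => g x - g' (-1) * x)); [| |exact Hx].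
  - intros y Hy. apply is_derive_Reals.
    replace 0 with (g' y - g' (-1) * 1) by (rewrite Hb by (unfold in_I; lra); ring).
    apply derivable_pt_lim_minus; [apply is_derive_Reals, D1|].
    apply derivable_pt_lim_scal, derivable_pt_lim_id.
  - intros y _. apply continuity_pt_filterlim, continuity_pt_minus.
    + apply continuity_pt_filterlim, (continuous_of_is_derive _ _ y (D1 y)).
    + apply continuity_pt_scal, derivable_continuous_pt, derivable_pt_id.
Qed.

Lemma L_op_affine p k Lam e : (p <= k)%nat -> eigen_R p (S k) Lam e ->
  exists a b, forall x, in_I x -> L_op k p Lam e x = a + b * x.
Proof.
  intros Hpk [He [_ Hop]].
  apply (affine_of_is_derive2_0 _ (L_op k p Lam (fun j => e (S j)))
    (L_op k p Lam (fun j => e (S (S j))))).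
  - intros x. apply is_derive_L_op, (Cm_derivs_R_le (2 * S k)); [lia | exact He].
  - intros x. apply (is_derive_L_op k p Lam (fun j => e (S j))).
    destruct He as [Hd Hc]. split; intros j Hj y; [apply Hd | apply Hc]; lia.
  - intros x Hx. rewrite <- (Ropp_involutive (L_op _ _ _ _ x)), <- L_op_succ, Hop by assumption.
    apply Ropp_0.
Qed.

Lemma int_I_scal (u : R -> R) c : (forall x, continuous u x) -> int_I (fun x => c * u x) = c * int_I u.
Proof.
  intros Hu. rewrite (int_I_ext _ (fun x => c * u x - 0 * u x)) by (intros; ring).
  rewrite int_I_lin by assumption. ring.
Qed.

(* Self-adjointness of [L_op k p Lam] under [k] boundary conditions. *)
Lemma int_I_eigen_R_mul_L_op p k Lam e f : eigen_R p k Lam e -> Cm_derivs_R (2 * k) f ->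
  (forall j, (j < k)%nat -> f j 1 = 0 /\ f j (-1) = 0) ->
  int_I (fun x => e 0%nat x * L_op k p Lam f x) = 0.
Proof.
  intros [He [Hb Hop]] Hf Hbf.
  rewrite int_I_mul_L_op; [| apply (Cm_derivs_R_le (2 * k)); [lia | exact He] | exact Hf | exact Hb].
  rewrite (int_I_ext (fun x => e k x * f k x) (fun x => f k x * e k x)) by (intros; ring).
  rewrite (int_I_ext (fun x => e (k - p)%nat x * f (k - p)%nat x)
             (fun x => f (k - p)%nat x * e (k - p)%nat x)) by (intros; ring).
  rewrite <- int_I_mul_L_op; [| apply (Cm_derivs_R_le (2 * k)); [lia | exact Hf] | exact He | exact Hbf].
  rewrite (int_I_ext _ (fun _ => 0)), int_I_zero; [reflexivity|].
  intros x Hx. rewrite Hop by (unfold in_I; lra). ring.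
Qed.

Lemma vanish_of_L_op_linear m p Lam e b : (1 <= p)%nat -> (p <= m)%nat -> Cm_derivs_R (2 * m) e ->
  (forall j, (j <= m)%nat -> e j 1 = 0 /\ e j (-1) = 0) ->
  (forall x, in_I x -> L_op m p Lam e x = b * x) -> int_I (fun x => x * e 0%nat x) = 0 ->
  forall x, in_I x -> e 0%nat x = 0.
Proof.
  intros Hp Hpm He Hb Hop Hodd.
  assert (Hpt : forall x, -1 < x < 1 -> L_op m p Lam e x = b * x)
    by (intros; apply Hop; unfold in_I; lra).
  pose proof He as [Hd Hc].
  assert (Cx0 : forall x, continuous (fun y => y * e 0%nat y) x)
    by (intros; apply continuous_Rmult; [apply continuous_id | apply Hc; lia]).
  assert (Hx2 : int_I (fun x => x * x * e 1%nat x) = 0).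
  { destruct (Hb 0%nat) as [b1 b2]; [lia|].
    rewrite (int_I_ext _ (fun x => e 1%nat x * (x * x))) by (intros; ring).
    rewrite (int_I_by_parts (e 0%nat) (e 1%nat) (fun x => x * x) (fun x => 2 * x)).
    - rewrite b1, b2, (int_I_ext _ (fun x => 2 * (x * e 0%nat x))), int_I_scal, Hodd
        by (intros; ring || auto). ring.
    - apply Hd; lia.
    - intros x. apply is_derive_Reals. replace (2 * x) with (1 * x + x * 1) by ring.
      apply derivable_pt_lim_mult; apply derivable_pt_lim_id.
    - apply Hc; lia.
    - intros x. apply continuous_Rmult; [apply continuous_const | apply continuous_id]. }
  apply (vanish_of_L_op_moments m p Lam e Hp Hpm He Hb); [| |lia].
  - rewrite (int_I_ext _ (fun x => b * (x * e 0%nat x))), int_I_scal, Hodd by (intros; rewrite ?Hpt; ring || auto).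
    ring.
  - assert (Cx2 : forall x, continuous (fun y => y * y * e 1%nat y) x).
    { intros x. apply continuous_Rmult; [apply continuous_Rmult; apply continuous_id | apply Hc; lia]. }
    rewrite (int_I_ext _ (fun x => b * (x * x * e 1%nat x))), int_I_scal, Hx2
      by (intros; rewrite ?Hpt; ring || auto). ring.
Qed.

Definition prim2 (e : nat -> R -> R) (j : nat) : R -> R :=
  match j with
  | O => fun x => RInt (fun y => RInt (e 0%nat) (-1) y) (-1) x
  | 1%nat => fun x => RInt (e 0%nat) (-1) x
  | S (S j) => e j
  end.

Lemma Cm_derivs_R_prim2 N e : Cm_derivs_R N e -> Cm_derivs_R (S (S N)) (prim2 e).
Proof.
  intros [Hd Hc].
  assert (D1 : forall x, is_derive (prim2 e 1) x (e 0%nat x))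
    by (intros; apply is_derive_RInt_left; intros; apply Hc; lia).
  assert (D0 : forall x, is_derive (prim2 e 0) x (prim2 e 1 x)).
  { intros x. apply is_derive_RInt_left. intros y. exact (continuous_of_is_derive _ _ y (D1 y)). }
  split; intros [|[|j]] Hj x; simpl.
  - exact (D0 x).
  - exact (D1 x).
  - apply Hd; lia.
  - exact (continuous_of_is_derive _ _ x (D0 x)).
  - exact (continuous_of_is_derive _ _ x (D1 x)).
  - apply Hc; lia.
Qed.

Lemma eigen_R_vanish_of_int_I_0 p k Lam e : (1 <= p)%nat -> (p <= k)%nat -> eigen_R p k Lam e ->
  int_I (e 0%nat) = 0 -> int_I (fun x => x * e 0%nat x) = 0 -> forall x, in_I x -> e 0%nat x = 0.
Proof.
  intros Hp Hpk [He [Hb Hop]] Hint Hodd x Hx.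
  assert (Hz : Cm_derivs_R (2 * S k) (prim2 e)).
  { replace (2 * S k)%nat with (S (S (2 * k))) by lia. apply Cm_derivs_R_prim2, He. }
  assert (Hz1 : prim2 e 1 (-1) = 0) by (simpl; rewrite RInt_point; reflexivity).
  assert (Hz0 : prim2 e 0 1 = 0).
  { change (int_I (prim2 e 1) = 0).
    rewrite (int_I_ext _ (fun x => 1 * prim2 e 1 x)) by (intros; ring).
    rewrite (int_I_by_parts (fun x => x) (fun _ => 1) (prim2 e 1) (e 0%nat)).
    - change (prim2 e 1 1) with (int_I (e 0%nat)). rewrite Hz1, Hint, Hodd. ring.
    - intros y. apply is_derive_Reals, derivable_pt_lim_id.
    - apply Hz; lia.
    - intros y. apply continuous_const.
    - apply (proj2 He); lia. }
  assert (Hopz : forall y, in_I y -> L_op (S k) p Lam (prim2 e) y = 0).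
  { intros y Hy. rewrite L_op_succ by exact Hpk. simpl. rewrite Hop by exact Hy. apply Ropp_0. }
  apply (vanish_of_L_op_moments (S k) p Lam (prim2 e) Hp ltac:(lia) Hz) with (j := 2%nat);
    [| | |lia|exact Hx].
  - intros [|[|j]] Hj; simpl.
    + split; [exact Hz0 | rewrite RInt_point; reflexivity].
    + split; [exact Hint | rewrite RInt_point; reflexivity].
    + apply Hb; lia.
  - rewrite (int_I_ext _ (fun _ => 0)), int_I_zero; [reflexivity|].
    intros y Hy. rewrite Hopz by (unfold in_I; lra). ring.
  - rewrite (int_I_ext _ (fun _ => 0)), int_I_zero; [reflexivity|].
    intros y Hy. rewrite Hopz by (unfold in_I; lra). ring.
Qed.

Theorem mainTheorem5 (p n : nat) :
  (1 <= p)%nat -> (p + 1 <= n)%nat ->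
  forall Lam : R, ~ (S_s p (n - 1) Lam /\ S_s p n Lam).
Proof.
  intros Hp Hn Lam [S1 S2].
  destruct n as [|k]; [lia|]. replace (S k - 1)%nat with k in S1 by lia.
  assert (Hpk : (p <= k)%nat) by lia.
  destruct (S_s_eigen_R _ _ _ S1) as [e1 [E1 [Odd1 [x1 [Hx1 NZ1]]]]].
  destruct (S_s_eigen_R _ _ _ S2) as [e2 [E2 [Odd2 [x2 [Hx2 NZ2]]]]].
  destruct (L_op_affine _ _ _ _ Hpk E2) as [a [b Hab]].
  destruct E2 as [C2 [B2 _]].
  (* test [L_op k p Lam e2 = a + b x] against the even function [e1 0] *)
  assert (Ha : a * int_I (e1 0%nat) = 0).
  { rewrite <- (int_I_eigen_R_mul_L_op _ _ _ _ e2 E1); [| apply (Cm_derivs_R_le (2 * S k)); [lia | exact C2]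
      | intros j Hj; apply B2; lia].
    rewrite (int_I_ext (fun x => e1 0%nat x * L_op k p Lam e2 x)
               (fun x => a * e1 0%nat x - (- b) * (x * e1 0%nat x)))
      by (intros; rewrite Hab by (unfold in_I; lra); ring).
    destruct E1 as [[_ C1] _].
    rewrite int_I_lin, Odd1; [ring | apply C1; lia |].
    intros x; apply continuous_Rmult; [apply continuous_id | apply C1; lia]. }
  destruct (Rmult_integral _ _ Ha) as [-> | H0].
  - apply NZ2, (vanish_of_L_op_linear k p Lam e2 b); auto.
    + apply (Cm_derivs_R_le (2 * S k)); [lia | exact C2].
    + intros j Hj; apply B2; lia.
    + intros x Hx; rewrite Hab by exact Hx; ring.
  - apply NZ1, (eigen_R_vanish_of_int_I_0 p k Lam e1); auto.
Qed.
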